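(* Assume $V=L$. Let $\xi_0,\xi_1,\xi_2,\dots\in\Xi$, let $\vartheta=\bigcup_n\xi_n$, and let $X\in\mathrm{IPS}_\vartheta$. Then $X=\bigcap_n\big((X\restriction\xi_n)\uparrow\vartheta\big)$. In particular, $X=\bigcap_{i\in\vartheta}\big((X\restriction[\subseteq i])\uparrow\vartheta\big)$.
   Context: $T$ is the set of all nonempty finite sequences of countable ordinals, ordered by strict extension $\subset$; $[\subseteq i]=\{j\in T:j\subseteq i\}$. $\Xi$ is the set of all at most countable $\xi\subseteq T$ closed downward under $\subset$. $D=2^\omega$; $D^\xi$ is the product of $\xi$ copies of $D$. For $\eta\subseteq\xi$ in $\Xi$: $x\restriction\eta$ is restriction of $x\in D^\xi$, $X\restriction\eta=\{x\restriction\eta:x\in X\}$ for $X\subseteq D^\xi$, and $Y\uparrow\xi=\{x\in D^\xi:x\restriction\eta\in Y\}$ for $Y\subseteq D^\eta$. For $\zeta\in\Xi$, $\mathrm{IPS}_\zeta$ is the set of all $X\subseteq D^\zeta$ for which there is a homeomorphism $H$ of $D^\zeta$ onto $X$ such that for all $x_0,x_1\in D^\zeta$ and all $\xi\in\Xi$, $\xi\subseteq\zeta$: $x_0\restriction\xi=x_1\restriction\xi\iff H(x_0)\restriction\xi=H(x_1)\restriction\xi$. *)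

From HB Require Import structures.
From mathcomp Require Import all_boot all_order all_algebra.
From mathcomp Require Import all_classical all_reals all_analysis.
From Stdlib Require Import List.

Set Implicit Arguments. Unset Strict Implicit. Unset Printing Implicit Defensive.
Local Open Scope classical_set_scope.

(* A countable ordinal is the order type (isomorphism class) of a         *)
(* well-ordering whose field is a subset of nat.                          *)

Definition fld (R : nat -> nat -> Prop) (n : nat) : Prop := R n n.

Definition nat_wellorder (R : nat -> nat -> Prop) : Prop :=
  (forall m n, R m n -> fld R m /\ fld R n) /\
  (forall m n, R m n -> R n m -> m = n) /\
  (forall m n p, R m n -> R n p -> R m p) /\
  (forall m n, fld R m -> fld R n -> R m n \/ R n m) /\
  (forall A : nat -> Prop, (exists m, A m /\ fld R m) ->
     exists m, A m /\ fld R m /\ forall n, A n -> fld R n -> R m n).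

Definition order_iso (R R' : nat -> nat -> Prop) : Prop :=
  exists f : nat -> nat,
    (forall m, fld R m -> fld R' (f m)) /\
    (forall m', fld R' m' -> exists m, fld R m /\ f m = m') /\
    (forall m n, fld R m -> fld R n -> (R m n <-> R' (f m) (f n))).

Definition otype (R : nat -> nat -> Prop) : (nat -> nat -> Prop) -> Prop :=
  fun R' => nat_wellorder R' /\ order_iso R R'.

Definition Ord : Type :=
  { C : (nat -> nat -> Prop) -> Prop | exists R, nat_wellorder R /\ C = otype R }.

Definition T : Type := { s : list Ord | s <> nil }.

Definition sext (i j : T) : Prop :=
  exists u : list Ord, u <> nil /\ proj1_sig j = proj1_sig i ++ u.

Definition ext (i j : T) : Prop := sext i j \/ i = j.

Definition below (i : T) : set T := fun j => ext j i.

Definition inXi (xi : set T) : Prop :=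
  countable xi /\ (forall i j, xi j -> sext i j -> xi i).

Definition D : Type := cantor_space.

Definition Dpow (xi : set T) : Type :=
  prod_topology (fun _ : { i : T | xi i } => D).

(* restriction x |` eta of x in D^xi (meaningful for eta \subseteq xi;
   coordinates outside xi, which never occur in that case, are set to a
   dummy value) *)
Definition restr (xi eta : set T) (x : Dpow xi) : Dpow eta :=
  fun j => match pselect (xi (proj1_sig j)) with
           | left h => x (exist _ (proj1_sig j) h)
           | right _ => fun _ => false
           end.

Arguments restr : clear implicits.

Definition restrS (xi eta : set T) (X : set (Dpow xi)) : set (Dpow eta) :=
  restr xi eta @` X.

Arguments restrS : clear implicits.

Definition upS (eta xi : set T) (Y : set (Dpow eta)) : set (Dpow xi) :=
  [set x : Dpow xi | Y (restr xi eta x)].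

Definition IPS (zeta : set T) : set (set (Dpow zeta)) :=
  fun X => exists H : Dpow zeta -> Dpow zeta,
    [/\ continuous H, H @` setT = X,
        (exists G : Dpow zeta -> Dpow zeta,
            (forall x, G (H x) = x) /\ {within X, continuous G}) &
        (forall (x0 x1 : Dpow zeta) (xi : set T), inXi xi -> xi `<=` zeta ->
            (restr zeta xi x0 = restr zeta xi x1 <->
             restr zeta xi (H x0) = restr zeta xi (H x1)))].

Arguments upS : clear implicits.
Arguments IPS : clear implicits.

From mathcomp Require Import all_boot all_classical all_analysis.

Set Implicit Arguments.
Unset Strict Implicit.
Unset Printing Implicit Defensive.

Local Open Scope classical_set_scope.

(* Write X = H(D^theta) with H as in the definition of IPS.  A point x of
   the right-hand side agrees on each xi_n with some H z_n.  If H z and H z'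
   agree on xi `&` eta, which is again in Xi, then so do z and z', so they
   glue to one w agreeing with z on xi and with z' on eta; H w then agrees
   with H z on xi and with H z' on eta.  Inductively, x agrees on every finite
   union of the xi_n with a point of X.  As the xi_n cover theta, these points
   converge to x coordinatewise, and X is compact, hence closed.  The second
   claim is the first one for the cones [below i], which lie in Xi. *)

Lemma restr_eqP (th eta : set T) (a b : Dpow th) : eta `<=` th ->
  restr th eta a = restr th eta b <->
  (forall j (h : th j), eta j -> a (exist _ j h) = b (exist _ j h)).
Proof.
move=> eta_th; split.
  move=> E j h etaj; have := congr1 (fun f => f (exist _ j etaj)) E.
  rewrite /restr /=; case: pselect => [h'|/(_ h)//].
  by rewrite (Prop_irrelevance h' h).
move=> ab; apply: functional_extensionality_dep => -[j etaj]; rewrite /restr /=.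
by case: pselect => // h; exact: ab.
Qed.

Lemma restr_eq_subset (th zeta eta : set T) (a b : Dpow th) :
  eta `<=` zeta -> zeta `<=` th ->
  restr th zeta a = restr th zeta b -> restr th eta a = restr th eta b.
Proof.
move=> eta_zeta zeta_th /restr_eqP-/(_ zeta_th) ab.
by apply/restr_eqP => [j /eta_zeta/zeta_th//|j h /eta_zeta]; exact: ab.
Qed.

Lemma restr_eqU (th xi eta : set T) (a b : Dpow th) :
  xi `<=` th -> eta `<=` th ->
  restr th xi a = restr th xi b -> restr th eta a = restr th eta b ->
  restr th (xi `|` eta) a = restr th (xi `|` eta) b.
Proof.
move=> xi_th eta_th /restr_eqP-/(_ xi_th) ab_xi /restr_eqP-/(_ eta_th) ab_eta.
have sU : xi `|` eta `<=` th by move=> j [/xi_th|/eta_th].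
by apply/restr_eqP => // j h [/ab_xi|/ab_eta]; apply.
Qed.

Lemma restr_glue (th xi eta : set T) (a b : Dpow th) :
  xi `<=` th -> eta `<=` th ->
  restr th (xi `&` eta) a = restr th (xi `&` eta) b ->
  exists c, restr th xi c = restr th xi a /\ restr th eta c = restr th eta b.
Proof.
move=> xi_th eta_th /restr_eqP ab.
have {}ab : forall j h, xi j -> eta j -> a (exist _ j h) = b (exist _ j h).
  by move=> j h xij etaj; apply: ab => // k [/xi_th].
exists (fun j => if pselect (xi (proj1_sig j)) then a j else b j).
split; apply/restr_eqP => // j h /= ?; case: pselect => //=.
by move=> xij; exact: ab.
Qed.

Lemma countable_setU (U : Type) (A B : set U) :
  countable A -> countable B -> countable (A `|` B).
Proof.
move=> cA cB.
have -> : A `|` B = \bigcup_(b in [set: bool]) (if b then A else B).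
  rewrite eqEsubset; split => x; first by case=> ?; [exists true|exists false].
  by case=> -[]; [left|right].
by apply: bigcup_countable; [exact: countableP|case].
Qed.

Lemma inXi0 : inXi set0.
Proof. by split; [exact: countable0|]. Qed.

Lemma inXiU (xi eta : set T) : inXi xi -> inXi eta -> inXi (xi `|` eta).
Proof.
move=> [cxi dxi] [ceta deta]; split; first exact: countable_setU.
by move=> i j [xij|etaj] ij; [left; exact: dxi ij|right; exact: deta ij].
Qed.

Lemma inXiI (xi eta : set T) : inXi xi -> inXi eta -> inXi (xi `&` eta).
Proof.
move=> [cxi dxi] [_ deta]; split.
  exact: sub_countable (subset_card_le (@subIsetl _ _ _)) cxi.
by move=> i j [xij etaj] ij; split; [exact: dxi ij|exact: deta ij].
Qed.

Lemma sext_trans (i j k : T) : sext i j -> sext j k -> sext i k.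
Proof.
move=> [u [u0 ij]] [v [_ jk]]; exists (u ++ v); split; first by case: u u0 {ij}.
by rewrite jk ij -List.app_assoc.
Qed.

Lemma ext_prefix (i j : T) :
  ext j i -> exists u, proj1_sig i = proj1_sig j ++ u.
Proof. by case=> [[u [_ ->]]|->]; [exists u|exists nil; rewrite cats0]. Qed.

Lemma inXi_below (i : T) : inXi (below i).
Proof.
split.
  apply/countable_injP; exists (fun j : T => size (proj1_sig j)).
  move=> [l1 p1] [l2 p2]; rewrite !inE.
  move=> /ext_prefix [u1 e1] /ext_prefix [u2 e2] /= es.
  have l12 : l1 = l2.
    have -> : l1 = take (size l1) (proj1_sig i) by rewrite e1 take_size_cat.
    by rewrite es e2 take_size_cat.
  by subst l2; rewrite (Prop_irrelevance p1 p2).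
by move=> j k [ki|->] jk; left => //; exact: sext_trans jk ki.
Qed.

Lemma Dpow_compact (th : set T) : compact [set: Dpow th].
Proof.
have := @tychonoff {classic {i : T | th i}} (fun _ => D) (fun _ => setT)
  (fun _ => cantor_space_compact).
by congr compact; rewrite eqEsubset.
Qed.

Lemma Dpow_hausdorff (th : set T) : hausdorff_space (Dpow th).
Proof.
exact: (@hausdorff_product {classic {i : T | th i}} (fun _ => D)
  (fun _ => cantor_space_hausdorff)).
Qed.

Lemma Dpow_cvg (th : set T) (F : set_system (Dpow th)) (x : Dpow th) :
  Filter F -> (forall j, F [set y : Dpow th | y j = x j]) -> F --> x.
Proof.
move=> FF Fj; apply/cvg_sup => j; apply/cvg_image => //.
  by rewrite eqEsubset; split => // d _; exists (fun _ => d).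
move=> N /= Nxj.
exists ([set y : Dpow th | y j = x j] `|` (fun y : Dpow th => y j) @^-1` N).
  by apply: filterS (Fj j) => y; left.
rewrite eqEsubset; split.
  by move=> _ [y [->|?] <-] //; exact: nbhs_singleton.
by move=> d Nd; exists (fun _ => d) => //; right.
Qed.

Section IPSFiniteApproximation.

Variables (th : set T) (H : Dpow th -> Dpow th).

Hypothesis H_restr :
  forall (z z' : Dpow th) (xi : set T), inXi xi -> xi `<=` th ->
  (restr th xi z = restr th xi z' <-> restr th xi (H z) = restr th xi (H z')).

Lemma IPS_glue (xi eta : set T) (z z' : Dpow th) :
  inXi xi -> inXi eta -> xi `<=` th -> eta `<=` th ->
  restr th (xi `&` eta) (H z) = restr th (xi `&` eta) (H z') ->
  exists w, restr th xi (H w) = restr th xi (H z) /\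
            restr th eta (H w) = restr th eta (H z').
Proof.
move=> xiXi etaXi xi_th eta_th Hzz'.
have sI : xi `&` eta `<=` th by move=> j [/xi_th].
have /(H_restr _ _ (inXiI xiXi etaXi) sI).2 zz' := Hzz'.
have [w [wz wz']] := restr_glue xi_th eta_th zz'.
exists w; split; first exact: (H_restr _ _ xiXi xi_th).1.
exact: (H_restr _ _ etaXi eta_th).1.
Qed.

Variables (I : Type) (A : set I) (xi : I -> set T).
Hypothesis xi_Xi : forall i, A i -> inXi (xi i).
Hypothesis xi_th : forall i, A i -> xi i `<=` th.

Let cover (l : seq {i | A i}) : set T :=
  \big[setU/set0]_(i <- l) xi (proj1_sig i).

Lemma inXi_cover l : inXi (cover l).
Proof.
elim: l => [|[i Ai] l IHl]; rewrite /cover ?big_nil ?big_cons.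
  exact: inXi0.
exact: inXiU (xi_Xi Ai) IHl.
Qed.

Lemma cover_sub l : cover l `<=` th.
Proof.
elim: l => [|[i Ai] l IHl]; rewrite /cover ?big_nil ?big_cons //.
by move=> j [/(xi_th Ai)|/IHl].
Qed.

Lemma IPS_approx (x : Dpow th) :
  (forall i, A i -> exists z, restr th (xi i) (H z) = restr th (xi i) x) ->
  forall l, exists z, restr th (cover l) (H z) = restr th (cover l) x.
Proof.
move=> xi_approx; elim=> [|[i Ai] l [z Hz]].
  by exists x; rewrite /cover big_nil; apply/restr_eqP.
have [z' Hz'] := xi_approx i Ai.
have [lXi l_th] := (inXi_cover l, @cover_sub l).
have Iz'z :
    restr th (xi i `&` cover l) (H z') = restr th (xi i `&` cover l) (H z).
  rewrite (restr_eq_subset (@subIsetl _ _ _) (xi_th Ai) Hz').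
  by rewrite (restr_eq_subset (@subIsetr _ _ _) l_th Hz).
have [w [wz' wz]] := IPS_glue (xi_Xi Ai) lXi (xi_th Ai) l_th Iz'z.
exists w; rewrite /cover big_cons.
by apply: restr_eqU; rewrite ?wz ?wz' //; exact: xi_th.
Qed.

End IPSFiniteApproximation.

Lemma Dpow_closed_approx (th : set T) (X : set (Dpow th)) (J : Type)
    (U : J -> set T) (l0 : J) (x : Dpow th) :
  closed X -> (forall l, U l `<=` th) ->
  (forall l1 l2, exists l, U l1 `|` U l2 `<=` U l) ->
  (forall j, th j -> exists l, U l j) ->
  (forall l, exists2 y, X y & restr th (U l) y = restr th (U l) x) ->
  X x.
Proof.
move=> clX U_th U_directed U_cover x_approx.
pose F := filter_from [set: J]
  (fun l => X `&` [set y | restr th (U l) y = restr th (U l) x]).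
have FF : ProperFilter F.
  apply: filter_from_proper => [|l _]; last by have [y] := x_approx l; exists y.
  apply: filter_from_filter; first by exists l0.
  move=> l1 l2 _ _; have [l l12] := U_directed l1 l2; exists l => // y [Xy yx].
  have restr_sub k : U k `<=` U l -> restr th (U k) y = restr th (U k) x.
    by move=> kl; exact: restr_eq_subset kl (U_th l) yx.
  by split; split => //; apply: restr_sub => j Uj; apply: l12; [left|right].
apply: (@closed_cvg _ _ F FF id X clX); first by exists l0 => // y [].
apply: Dpow_cvg => -[j thj]; have [l Ulj] := U_cover j thj.
by exists l => // y [_ /restr_eqP yx]; exact: yx.
Qed.

Lemma IPS_closed (th : set T) (X : set (Dpow th)) : IPS th X -> closed X.
Proof.
case=> H [H_cont <- _ _]; apply: compact_closed; first exact: Dpow_hausdorff.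
apply: continuous_compact; last exact: Dpow_compact.
exact: continuous_subspaceT.
Qed.

Lemma IPS_bigcap_upS (I : Type) (A : set I) (xi : I -> set T) (th : set T)
    (X : set (Dpow th)) :
  (forall i, A i -> inXi (xi i)) -> (forall i, A i -> xi i `<=` th) ->
  th `<=` \bigcup_(i in A) xi i -> IPS th X ->
  X = \bigcap_(i in A) upS (xi i) th (restrS th (xi i) X).
Proof.
move=> xi_Xi xi_th th_cover X_IPS; have clX := IPS_closed X_IPS.
case: X_IPS => H [_ HX _ H_restr].
rewrite eqEsubset; split => [x Xx i Ai|x x_up]; first by exists x.
have xi_approx i : A i -> exists z, restr th (xi i) (H z) = restr th (xi i) x.
  by move=> Ai; have [y] := x_up i Ai; rewrite -HX => -[z _ <-]; exists z.
pose cover (l : seq {i | A i}) : set T :=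
  \big[setU/set0]_(i <- l) xi (proj1_sig i).
apply: (Dpow_closed_approx (U := cover) nil clX).
- exact: cover_sub xi_th.
- by move=> l1 l2; exists (l1 ++ l2); rewrite /cover big_cat.
- move=> j /th_cover [i Ai xij]; exists [:: exist _ i Ai].
  by rewrite /cover big_cons big_nil; left.
- move=> l; have [z Hz] := IPS_approx H_restr xi_Xi xi_th xi_approx l.
  by exists (H z); rewrite // -HX; exists z.
Qed.

Theorem lemma2p25 (xi : nat -> set T) (theta : set T) (X : set (Dpow theta)) :
  (forall n, inXi (xi n)) ->
  theta = \bigcup_n xi n ->
  IPS theta X ->
  X = \bigcap_n upS (xi n) theta (restrS theta (xi n) X) /\
  X = \bigcap_(i in theta) upS (below i) theta (restrS theta (below i) X).
Proof.
move=> xi_Xi theta_cup X_IPS.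
have xi_theta n : xi n `<=` theta by rewrite theta_cup => j xij; exists n.
have below_theta i : theta i -> below i `<=` theta.
  move=> thi j [ji|->] //; move: thi; rewrite theta_cup => -[n _ xin].
  by exists n => //; exact: (proj2 (xi_Xi n)) xin ji.
split; apply: IPS_bigcap_upS X_IPS.
- by move=> n _; exact: xi_Xi.
- by move=> n _; exact: xi_theta.
- by rewrite theta_cup.
- by move=> i _; exact: inXi_below.
- exact: below_theta.
- by move=> i thi; exists i => //; right.
Qed.
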